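(* Let $(\mathcal{G},\alpha)$ be an abstract GKM graph and $p\neq q$ vertices. Set $P=\prod_{e\in\mathcal{E}_p\setminus\mathcal{E}_{pq}}\alpha(e)$, $Q=\prod_{e\in\mathcal{E}_q\setminus\mathcal{E}_{qp}}\alpha(e)$, and for $e\in\mathcal{E}_{pq}$ let $c(e)=|\{e'\in\mathcal{E}_{pq}: e'\neq e,\ \alpha(\overline{e'})=-\alpha(e')\}|$. Then for every $e\in\mathcal{E}_{pq}$, the polynomial $P-(-1)^{c(e)}Q$ is divisible by $\alpha(e)$ in $H^*(BT)$.
   Context: $H^*(BT)=\mathbb{Z}[x_1,\dots,x_r]$ with $\deg x_i=2$. Let $\mathcal{G}$ be a finite $n$-valent undirected graph (multiple edges allowed, no loops) with vertex set $\mathcal{V}$ and set of directed edges $\mathcal{E}$; for $e\in\mathcal{E}$, $\overline e$ is the reversed edge, $i(e),t(e)$ its initial and terminal vertices, $\mathcal{E}_p=\{e: i(e)=p\}$, $\mathcal{E}_{pq}=\{e: i(e)=p,\ t(e)=q\}$. An axial function $\alpha:\mathcal{E}\to H^2(BT)$ satisfies: $\alpha(\overline e)=\pm\alpha(e)$; $\alpha(e),\alpha(e')$ linearly independent over $\mathbb{Z}$ if $e\ne e'$, $i(e)=i(e')$; coefficients of each $\alpha(e)$ have gcd $1$. An abstract GKM graph is such $(\mathcal{G},\alpha)$ admitting a parallel transport, i.e. bijections $\mathcal{P}_e:\mathcal{E}_{i(e)}\to\mathcal{E}_{t(e)}$ with $\mathcal{P}_{\overline e}=\mathcal{P}_e^{-1}$,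 $\mathcal{P}_e(e)=\overline e$, $\alpha(\mathcal{P}_e(e'))-\alpha(e')\in\mathbb{Z}\alpha(e)$ for all $e'\in\mathcal{E}_{i(e)}$. *)

From HB Require Import structures.
From mathcomp Require Import all_boot all_order all_algebra.
From mathcomp Require Import mpoly.
Set Implicit Arguments. Unset Strict Implicit. Unset Printing Implicit Defensive.
Import Order.TTheory GRing.Theory Num.Theory.
Local Open Scope ring_scope.

(* H^*(BT) = Z[x_1..x_r] is {mpoly int[r]}; an element of H^2(BT) is
   represented by its integer coefficient row vector v : 'rV[int]_r,
   i.e. the linear form \sum_i v_i x_i. *)
Definition lin (r : nat) (v : 'rV[int]_r) : {mpoly int[r]} :=
  \sum_(i < r) (v 0 i)%:MP * 'X_i.

Definition gcd_coefs (r : nat) (v : 'rV[int]_r) : int :=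
  foldr gcdz 0 [seq v 0 i | i <- enum 'I_r].

(* A finite n-valent graph (multiple edges allowed, no loops), given by its
   vertex set V and its set E of directed edges, with reversal [erev],
   initial vertex [src] (= i) and terminal vertex [tgt] (= t). *)
Record graph (n : nat) := Graph {
  V : finType;
  E : finType;
  erev : E -> E;
  src : E -> V;
  tgt : E -> V;
  erevK : involutive erev;
  src_erev : forall e, src (erev e) = tgt e;
  no_loop : forall e, src e != tgt e;
  valent : forall p : V, #|[set e | src e == p]| = n
}.

Definition axial (n r : nat) (G : graph n) (alpha : E G -> 'rV[int]_r) :=
  [/\ forall e, alpha (erev e) = alpha e \/ alpha (erev e) = - alpha e,
      forall e e', e != e' -> src e = src e' ->
        forall a b : int, a *: alpha e + b *: alpha e' = 0 -> a = 0 /\ b = 0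
    & forall e, gcd_coefs (alpha e) = 1].

Definition parallel_transport (n r : nat) (G : graph n)
    (alpha : E G -> 'rV[int]_r) (Pt : E G -> E G -> E G) :=
  forall e,
    [/\ forall e', src e' = src e -> src (Pt e e') = tgt e,
        forall e', src e' = src e -> Pt (erev e) (Pt e e') = e',
        Pt e e = erev e
      & forall e', src e' = src e ->
          exists k : int, alpha (Pt e e') - alpha e' = k *: alpha e].

Definition abstract_GKM (n r : nat) (G : graph n) (alpha : E G -> 'rV[int]_r) :=
  axial alpha /\ exists Pt, parallel_transport alpha Pt.

(* Parallel transport along e maps E_p minus e bijectively onto E_q minus the
   reversed edge, and changes each weight only by a multiple of alpha(e); so the
   products of the weights on the two sides agree modulo alpha(e).  Splitting
   off the other edges between p and q, whose weights seen from q are those seen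
   from p up to the sign (-1)^c(e), gives (P - (-1)^c(e) Q) R = 0 modulo alpha(e),
   where R is the product of the weights of those edges.  Because alpha(e) is
   primitive it generates a prime ideal of Z[x_1, ..., x_r], and the factors of
   R are not in it since they are independent of alpha(e); hence R cancels. *)

From HB Require Import structures.
From mathcomp Require Import all_boot all_order all_algebra.
From mathcomp Require Import mpoly.
From mathcomp Require Import ring.
Import Order.TTheory GRing.Theory Num.Theory.
Set Implicit Arguments. Unset Strict Implicit. Unset Printing Implicit Defensive.
Local Open Scope ring_scope.

Section Divisibility.
Variable R : comPzRingType.
Implicit Types a x y z : R.

Definition dvdr a x := exists y, x = a * y.

Lemma dvdr0 a : dvdr a 0.
Proof. by exists 0; rewrite mulr0. Qed.

Lemma dvdrD a x y : dvdr a x -> dvdr a y -> dvdr a (x + y).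
Proof. by move=> [x' ->] [y' ->]; exists (x' + y'); rewrite mulrDr. Qed.

Lemma dvdrN a x : dvdr a x -> dvdr a (- x).
Proof. by move=> [x' ->]; exists (- x'); rewrite mulrN. Qed.

Lemma dvdr_mulr a x y : dvdr a x -> dvdr a (x * y).
Proof. by move=> [x' ->]; exists (x' * y); rewrite mulrA. Qed.

Lemma dvdr_mull a x y : dvdr a y -> dvdr a (x * y).
Proof. by rewrite mulrC; apply: dvdr_mulr. Qed.

Lemma dvdr_sum a (I : Type) (s : seq I) (P : pred I) (F : I -> R) :
  (forall i, P i -> dvdr a (F i)) -> dvdr a (\sum_(i <- s | P i) F i).
Proof. by move=> dvdF; apply: big_ind => //; [apply: dvdr0 | apply: dvdrD]. Qed.

Lemma dvdr_mulB a x1 x2 y1 y2 :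
  dvdr a (x1 - y1) -> dvdr a (x2 - y2) -> dvdr a (x1 * x2 - y1 * y2).
Proof.
move=> dvd1 dvd2; have -> : x1 * x2 - y1 * y2 = (x1 - y1) * x2 + y1 * (x2 - y2).
  by ring.
by apply: dvdrD; [apply: dvdr_mulr | apply: dvdr_mull].
Qed.

Lemma dvdr_prodB a (I : Type) (s : seq I) (P : pred I) (F F' : I -> R) :
  (forall i, P i -> dvdr a (F i - F' i)) ->
  dvdr a (\prod_(i <- s | P i) F i - \prod_(i <- s | P i) F' i).
Proof.
move=> dvdF; apply: (big_ind2 (fun x y => dvdr a (x - y))) => //.
- by rewrite subrr; apply: dvdr0.
- by move=> *; apply: dvdr_mulB.
Qed.

Lemma dvdr_expB a x y k : dvdr a (x - y) -> dvdr a (x ^+ k - y ^+ k).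
Proof.
move=> dvdxy; elim: k => [|k IHk]; first by rewrite !expr0 subrr; apply: dvdr0.
by rewrite !exprS; apply: dvdr_mulB.
Qed.

Lemma dvdr_cancel_prod a x (I : finType) (P : pred I) (F : I -> R) :
  (forall y z, dvdr a (y * z) -> dvdr a y \/ dvdr a z) ->
  (forall i, P i -> ~ dvdr a (F i)) ->
  dvdr a (x * \prod_(i | P i) F i) -> dvdr a x.
Proof.
move=> a_prime a_ndvdF.
pose cancellable z := forall y, dvdr a (y * z) -> dvdr a y.
suff : cancellable (\prod_(i | P i) F i) by apply.
apply: big_ind => [y|z1 z2 can1 can2 y|i Pi y].
- by rewrite mulr1.
- by rewrite mulrA => /can2 /can1.
- by case/a_prime => // /(a_ndvdF i Pi).
Qed.

End Divisibility.

Section LinearForms.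
Variable r : nat.
Implicit Types (v w : 'rV[int]_r) (u : 'I_r -> int).

Lemma linD v w : lin (v + w) = lin v + lin w.
Proof.
by rewrite /lin -big_split; apply: eq_bigr => i _; rewrite mxE mpolyCD mulrDl.
Qed.

Lemma linN v : lin (- v) = - lin v.
Proof.
by rewrite /lin -sumrN; apply: eq_bigr => i _; rewrite mxE mpolyCN mulNr.
Qed.

Lemma linZ k v : lin (k *: v) = k%:MP * lin v.
Proof.
by rewrite /lin mulr_sumr; apply: eq_bigr => i _; rewrite mxE mpolyCM mulrA.
Qed.

Lemma meval_lin u v : (lin v).@[u] = \sum_(i < r) v 0 i * u i.
Proof.
by rewrite /lin raddf_sum; apply: eq_bigr => i _; rewrite /= mevalM mevalC mevalXU.
Qed.

Lemma lin_inj : injective (@lin r).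
Proof.
move=> v w eq_vw; apply/rowP => i.
have coef_lin v' : (lin v').@[fun j => (j == i)%:R] = v' 0 i.
  rewrite meval_lin (bigD1 i) //= eqxx mulr1 big1 ?addr0 // => j /negbTE ->.
  by rewrite mulr0.
by rewrite -coef_lin eq_vw coef_lin.
Qed.

Lemma prod_lin_sign (I : finType) (S : pred I) (b b' : I -> 'rV[int]_r) :
  (forall i, S i -> b' i = b i \/ b' i = - b i) ->
  \prod_(i | S i) lin (b' i) =
  (-1) ^+ #|[set i | S i & b' i == - b i]| * \prod_(i | S i) lin (b i).
Proof.
move=> b'_sign; rewrite [LHS](bigID (fun i => b' i == - b i)) /=.
rewrite [X in _ = _ * X](bigID (fun i => b' i == - b i)) /= mulrA.
congr (_ * _).
  rewrite (eq_bigr (fun i => - lin (b i))) => [|i /andP [_ /eqP ->]]; last first.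
    exact: linN.
  by rewrite prodrN; congr (_ ^+ _ * _); apply: eq_card => i; rewrite !inE.
apply: eq_bigr => i /andP [Si neg_i].
by case: (b'_sign i Si) => [-> // | eq_neg]; rewrite eq_neg eqxx in neg_i.
Qed.

Lemma foldr_gcdz_bezout (T : eqType) (s : seq T) (f : T -> int) : uniq s ->
  exists g : T -> int, \sum_(t <- s) g t * f t = foldr gcdz 0 (map f s).
Proof.
elim: s => [|t s IHs] /=; first by exists (fun _ => 0); rewrite big_nil.
case/andP => t_notin_s uniq_s; have [g sum_g] := IHs uniq_s.
have [u [v bezout_uv]] := Bezoutz (f t) (foldr gcdz 0 (map f s)).
exists (fun t' => if t' == t then u else v * g t').
rewrite big_cons eqxx -bezout_uv -sum_g mulr_sumr; congr (_ + _).
apply: eq_big_seq => t' t'_in_s; rewrite mulrA ifF //.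
by apply: contraNF t_notin_s => /eqP <-.
Qed.

Lemma gcd_coefs_bezout v : gcd_coefs v = 1 -> exists u, (lin v).@[u] = 1.
Proof.
move=> gcd_v; have [g sum_g] := foldr_gcdz_bezout (fun i => v 0 i) (enum_uniq 'I_r).
exists g; rewrite meval_lin -gcd_v /gcd_coefs -sum_g big_enum.
by apply: eq_bigr => i _; rewrite mulrC.
Qed.

End LinearForms.

(* When [u] is a point with [a(u) = 1], the substitution [x |-> x - x(u) a]
   is a ring endomorphism of Z[x_1..x_r] that fixes everything modulo [a] and
   kills [a]; its kernel is exactly the ideal (a), which is therefore prime. *)
Section ProjectionAlongLinearForm.
Variables (r : nat) (a : 'rV[int]_r) (u : 'I_r -> int).
Hypothesis a_u : (lin a).@[u] = 1.
Implicit Types (v : 'rV[int]_r) (x y : {mpoly int[r]}).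

Definition proj_along x := x \mPo [tuple 'X_i - (u i)%:MP * lin a | i < r].

Lemma proj_along_lin v :
  proj_along (lin v) = lin v - ((lin v).@[u])%:MP * lin a.
Proof.
rewrite /proj_along {1}/lin raddf_sum /= meval_lin raddf_sum /= mulr_suml.
rewrite /lin -sumrB; apply: eq_bigr => i _.
rewrite rmorphM /= comp_mpolyC comp_mpolyXU -tnth_nth tnth_mktuple mpolyCM.
by rewrite -/(lin a); ring.
Qed.

Lemma proj_along_a : proj_along (lin a) = 0.
Proof. by rewrite proj_along_lin a_u mul1r subrr. Qed.

Lemma proj_along_congr x : dvdr (lin a) (proj_along x - x).
Proof.
rewrite /proj_along comp_mpolyEX [X in _ - X]mpolyE -sumrB; apply: dvdr_sum => m _.
rewrite -scalerBr -mul_mpolyC; apply: dvdr_mull.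
rewrite comp_mpolyX mpolyXE_id; apply: dvdr_prodB => i _; apply: dvdr_expB.
rewrite tnth_mktuple addrAC subrr add0r; apply: dvdrN.
by exists (u i)%:MP; rewrite mulrC.
Qed.

Lemma dvdr_proj_along x : dvdr (lin a) x <-> proj_along x = 0.
Proof.
split=> [[y ->]|proj_x0].
  by rewrite /proj_along rmorphM /= -/(proj_along _) proj_along_a mul0r.
by rewrite -[x]opprK -[- x]add0r -proj_x0; apply/dvdrN/proj_along_congr.
Qed.

Lemma dvdr_lin_mul x y :
  dvdr (lin a) (x * y) -> dvdr (lin a) x \/ dvdr (lin a) y.
Proof.
rewrite !dvdr_proj_along /proj_along rmorphM /= => /eqP.
by rewrite mulf_eq0 => /orP [] /eqP; [left | right].
Qed.

Lemma dvdr_lin_lin v : dvdr (lin a) (lin v) -> v = (lin v).@[u] *: a.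
Proof.
rewrite dvdr_proj_along proj_along_lin => /eqP; rewrite subr_eq0 => /eqP.
by rewrite -linZ => /lin_inj.
Qed.

End ProjectionAlongLinearForm.

Lemma primitive_lin_prime r (a : 'rV[int]_r) (x y : {mpoly int[r]}) :
  gcd_coefs a = 1 ->
  dvdr (lin a) (x * y) -> dvdr (lin a) x \/ dvdr (lin a) y.
Proof. move=> /gcd_coefs_bezout [u a_u]; exact: (dvdr_lin_mul a_u). Qed.

Lemma primitive_lin_ndvdr r (a b : 'rV[int]_r) : gcd_coefs a = 1 ->
  (forall k k' : int, k *: a + k' *: b = 0 -> k = 0 /\ k' = 0) ->
  ~ dvdr (lin a) (lin b).
Proof.
move=> /gcd_coefs_bezout [u a_u] a_b_indep /(dvdr_lin_lin a_u) b_a.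
have [|_ /eqP] := a_b_indep ((lin b).@[u]) (-1).
  by rewrite scaleN1r -b_a subrr.
by rewrite oppr_eq0 oner_eq0.
Qed.

Section GKMGraphs.
Variables (n r : nat) (G : graph n) (alpha : E G -> 'rV[int]_r).
Implicit Types (e f : E G) (p q : V G).

Lemma tgt_erev e : tgt (erev e) = src e.
Proof. by rewrite -src_erev erevK. Qed.

Lemma prod_out_edges_split (R : comPzRingType) (F : E G -> R) e p q :
  src e = p -> tgt e = q ->
  \prod_(f | (src f == p) && (f != e)) F f =
  \prod_(f | (src f == p) && (tgt f != q)) F f *
  \prod_(f | [&& src f == p, tgt f == q & f != e]) F f.
Proof.
move=> src_e tgt_e; rewrite (bigID (fun f => tgt f == q)) /= mulrC.
congr (_ * _); apply: eq_bigl => f; case: (src f == p) => //=.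
  by case: (f =P e) => [->|]; rewrite ?tgt_e ?eqxx.
by rewrite andbC.
Qed.

Lemma prod_parallel_erev (R : comPzRingType) (F : E G -> R) e p q :
  \prod_(f | [&& src f == q, tgt f == p & f != erev e]) F f =
  \prod_(f | [&& src f == p, tgt f == q & f != e]) F (erev f).
Proof.
rewrite (reindex_inj (inv_inj (@erevK _ G))) /=; apply: eq_bigl => f.
by rewrite src_erev tgt_erev (inj_eq (inv_inj (@erevK _ G))) andbCA.
Qed.

Section ParallelTransport.
Variables (Pt : E G -> E G -> E G) (alphaPt : parallel_transport alpha Pt).

Lemma prod_transport (R : comPzRingType) (F : E G -> R) e :
  \prod_(f | (src f == src e) && (f != e)) F (Pt e f) =
  \prod_(f | (src f == tgt e) && (f != erev e)) F f.
Proof.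
have [Pt_src Pt_K Pt_e _] := alphaPt e.
have [Pt'_src Pt'_K Pt'_e _] := alphaPt (erev e).
rewrite erevK src_erev tgt_erev in Pt'_src Pt'_K Pt'_e.
symmetry; rewrite (reindex_onto (Pt e) (Pt (erev e))) /=; last first.
  by move=> f /andP [/eqP /Pt'_K].
apply: eq_bigl => f; apply/andP/andP => [[/andP [/eqP src_f ne_f] /eqP Pt_f]|].
  have src_f' : src f = src e by rewrite -Pt_f Pt'_src.
  by rewrite src_f' eqxx; split=> //; apply: contraNneq ne_f => ->; rewrite Pt_e.
move=> [/eqP src_f ne_f]; rewrite Pt_src // eqxx Pt_K //; split=> //=.
by apply: contraNneq ne_f => Pt_f; rewrite -(Pt_K f) // Pt_f Pt'_e.
Qed.

Lemma transport_congr e :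
  dvdr (lin (alpha e))
    (\prod_(f | (src f == src e) && (f != e)) lin (alpha (Pt e f)) -
     \prod_(f | (src f == src e) && (f != e)) lin (alpha f)).
Proof.
apply: dvdr_prodB => f /andP [/eqP src_f _].
have [_ _ _ /(_ f src_f) [k Pt_f]] := alphaPt e.
by exists k%:MP; rewrite -linN -linD Pt_f linZ mulrC.
Qed.

End ParallelTransport.
End GKMGraphs.

Theorem lemma4p1 (n r : nat) (G : graph n) (alpha : E G -> 'rV[int]_r)
  (HG : abstract_GKM alpha) (p q : V G) (hpq : p != q) :
  let P := \prod_(e : E G | (src e == p) && (tgt e != q)) lin (alpha e) in
  let Q := \prod_(e : E G | (src e == q) && (tgt e != p)) lin (alpha e) in
  let c := fun e : E G =>
    #|[set e' : E G | [&& src e' == p, tgt e' == q, (e' != e) &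
                          (alpha (erev e') == - alpha e')]]| in
  forall e : E G, src e = p -> tgt e = q ->
    exists f : {mpoly int[r]}, P - (-1) ^+ (c e) * Q = lin (alpha e) * f.
Proof.
move=> P Q c e src_e tgt_e.
case: HG => [[alpha_erev alpha_indep alpha_gcd] [Pt alphaPt]].
pose parallel f := [&& src f == p, tgt f == q & f != e].
pose R := \prod_(f | parallel f) lin (alpha f).
have prod_p : \prod_(f | (src f == p) && (f != e)) lin (alpha f) = P * R :=
  prod_out_edges_split _ src_e tgt_e.
have prod_q : \prod_(f | (src f == tgt e) && (f != erev e)) lin (alpha f) =
              Q * ((-1) ^+ c e * R).
  rewrite (prod_out_edges_split _ (src_erev e) (tgt_erev e)) tgt_e src_e.
  rewrite prod_parallel_erev.
  rewrite (prod_lin_sign (b := alpha) (b' := alpha \o @erev _ G)); last first.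
    by move=> f _; apply: alpha_erev.
  by congr (_ * (_ ^+ _ * _)); apply: eq_card => f; rewrite !inE -!andbA.
have := transport_congr alphaPt e.
rewrite (prod_transport alphaPt (fun f => lin (alpha f))) prod_q src_e prod_p.
move=> /dvdrN dvdr_PQR.
apply: (dvdr_cancel_prod (P := parallel) (F := fun f => lin (alpha f))).
- by move=> x y; apply: primitive_lin_prime.
- move=> f /and3P [/eqP src_f _ ne_fe]; apply: primitive_lin_ndvdr => //.
  by apply: alpha_indep; [rewrite eq_sym | rewrite src_f].
- by move: dvdr_PQR; congr dvdr; rewrite -/R opprB mulrBl -mulrA mulrCA.
Qed.
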